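(* Assume condition (H). Then for all integers $0\le m\le n$ we have $d_{m,n}\le d_{m-1,n}$, and for all integers $-1\le m\le n$ we have $d_{m,n}\le d_{m,n+1}$. That is, in the region $m\le n$, $d_{m,n}$ is non-increasing in $m$ and non-decreasing in $n$.
   Context: Let $\mathbb{N}=\{0,1,2,\dots\}$. Fix a sequence $(\pi^n)_{n\in\mathbb{N}}$ where each $\pi^n=(\pi^n_i)_{i\in\mathbb{N}}$ is a probability distribution on $\mathbb{N}$ with support contained in $\{0,\dots,n\}$, and $\pi^n\ne\pi^m$ for $m\ne n$. Define reals $d_{m,n}$ for $m,n\in\mathbb{N}\cup\{-1\}$ recursively as follows: $d_{-1,-1}=0$, $d_{-1,j}=d_{j,-1}=1$ for $j\in\mathbb{N}$, and for $m,n\in\mathbb{N}$, $$d_{m,n}=\min_{z\in\mathcal{F}_{m,n}}\sum_{i=0}^m\sum_{j=0}^n z_{i,j}\,d_{i-1,j-1},$$ where $\mathcal{F}_{m,n}$ is the set of arrays $z=(z_{i,j})_{0\le i\le m,\,0\le j\le n}$ with $z_{i,j}\ge0$, $\sum_{j=0}^n z_{i,j}=\pi^m_i$ for all $i\le m$, and $\sum_{i=0}^m z_{i,j}=\pi^n_j$ for all $j\le n$. Condition (H) means: for every $n\ge1$, $\pi^n_n>0$ and $0\le\pi^n_i\le\pi^{n-1}_i$ for all $i<n$. *)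

From HB Require Import structures.
From mathcomp Require Import all_boot all_order all_algebra.
From mathcomp Require Import reals.
Set Implicit Arguments. Unset Strict Implicit. Unset Printing Implicit Defensive.
Import Order.TTheory GRing.Theory Num.Theory.
Local Open Scope ring_scope.

(* pi n i  stands for  pi^n_i. *)

Definition prob_seq (R : realType) (pi : nat -> nat -> R) : Prop :=
  forall n : nat,
    (forall i : nat, 0 <= pi n i) /\
    (forall i : nat, (n < i)%N -> pi n i = 0) /\
    \sum_(i < n.+1) pi n i = 1.

Definition pairwise_distinct (R : realType) (pi : nat -> nat -> R) : Prop :=
  forall m n : nat, m <> n -> pi m <> pi n.

Definition condH (R : realType) (pi : nat -> nat -> R) : Prop :=
  forall n : nat, (1 <= n)%N ->
    0 < pi n n /\ (forall i : nat, (i < n)%N -> 0 <= pi n i <= pi n.-1 i).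

Definition coupling (R : realType) (pi : nat -> nat -> R) (m n : nat)
    (z : 'M[R]_(m.+1, n.+1)) : Prop :=
  (forall i j, 0 <= z i j) /\
  (forall i : 'I_m.+1, \sum_(j < n.+1) z i j = pi m i) /\
  (forall j : 'I_n.+1, \sum_(i < m.+1) z i j = pi n j).

(* Shifted indexing: D a b  stands for  d_{a-1,b-1}, for a b : nat
   (so D 0 0 = d_{-1,-1}, D (m+1) (n+1) = d_{m,n}). *)

Definition cost (R : realType) (D : nat -> nat -> R) (m n : nat)
    (z : 'M[R]_(m.+1, n.+1)) : R :=
  \sum_(i < m.+1) \sum_(j < n.+1) z i j * D i j.

Definition is_d (R : realType) (pi : nat -> nat -> R) (D : nat -> nat -> R) : Prop :=
  D 0%N 0%N = 0 /\
  (forall j : nat, D 0%N j.+1 = 1 /\ D j.+1 0%N = 1) /\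
  (forall m n : nat,
     (exists z : 'M[R]_(m.+1, n.+1), coupling pi z /\ cost D z = D m.+1 n.+1) /\
     (forall z : 'M[R]_(m.+1, n.+1), coupling pi z -> D m.+1 n.+1 <= cost D z)).

From HB Require Import structures.
From mathcomp Require Import all_boot all_order all_algebra.
From mathcomp Require Import reals.
From mathcomp Require Import ring lra zify.
Import Order.TTheory GRing.Theory Num.Theory.
Local Open Scope ring_scope.
Set Implicit Arguments. Unset Strict Implicit. Unset Printing Implicit Defensive.

(* Each inequality is proved by transforming an optimal coupling for the larger
   side into a coupling for the smaller side without increasing its cost.
   Gluing couplings shows that d is a pseudometric.  By (H), pi^n_j <= pi^m_j
   for j <= m <= n, so an optimal coupling of pi^m and pi^n can be made diagonal
   on its first m+1 columns (reroute the off-diagonal mass of column j through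
   the diagonal entry (j,j)); each row i <= m then keeps at least
   pi^m_i - pi^n_i of its mass in the columns beyond m.
   - d_{m+1,n} <= d_{m,n}: the new row m+1 of pi^{m+1} is filled with part of
     that tail mass; moving mass from row i to row m+1 inside a column j > m is
     cheaper, by induction on the column index.
   - d_{m,n} <= d_{m,n+1}: part of the tail mass is moved onto the diagonal,
     then the last column n+1 is merged into the columns j > m that are now
     short of mass; moving mass from column n+1 to column j is cheaper, by
     induction on the column index. *)

Section Couplings.
Variable R : realFieldType.
Implicit Types (M N K : nat) (mu nu rho : nat -> R) (Z f : nat -> nat -> R).

Lemma sum_ord_D1 N j (F : nat -> R) : (j < N)%N ->
  \sum_(l < N) F l = F j + \sum_(l < N | (l : nat) != j) F l.
Proof. by move=> jN; rewrite (bigD1 (Ordinal jN)). Qed.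

Lemma sum_ord_pick N j (F : nat -> R) : (j < N)%N ->
  \sum_(l < N) (if (l : nat) == j then F l else 0) = F j.
Proof.
move=> jN; rewrite (sum_ord_D1 (fun l => if l == j then F l else 0) jN) /=.
by rewrite eqxx big1 ?addr0 // => l /negbTE ->.
Qed.

Lemma ler_sum_term N j (P : pred nat) (F : nat -> R) :
  (forall k, 0 <= F k) -> (j < N)%N -> P j -> F j <= \sum_(k < N | P k) F k.
Proof.
by move=> F0 jN Pj; rewrite (bigD1 (Ordinal jN)) //= lerDl sumr_ge0.
Qed.

Lemma divfK_null (x y : R) : (y = 0 -> x = 0) -> x / y * y = x.
Proof. by have [->|/divfK //] := eqVneq y 0; move=> ->; rewrite ?mul0r. Qed.

Lemma nondecn_le (f : nat -> R) lo hi :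
  (forall b, (lo <= b)%N -> (b < hi)%N -> f b <= f b.+1) ->
  forall x y, (lo <= x)%N -> (x <= y)%N -> (y <= hi)%N -> f x <= f y.
Proof.
move=> step x y lox; elim: y => [|y IH]; first by rewrite leqn0 => /eqP ->.
rewrite leq_eqVlt => /orP[/eqP -> //|xy] yh.
exact: le_trans (IH xy (ltnW yh)) (step y (leq_trans lox xy) yh).
Qed.

Lemma nonincn_le (f : nat -> R) lo hi :
  (forall a, (lo <= a)%N -> (a < hi)%N -> f a.+1 <= f a) ->
  forall x y, (lo <= x)%N -> (x <= y)%N -> (y <= hi)%N -> f y <= f x.
Proof.
move=> step x y lox xy yh; rewrite -lerN2.
apply: (nondecn_le (f := fun a => - f a) _ lox xy yh) => a loa ah.
by rewrite lerN2 step.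
Qed.

(* Couplings live on nat x nat and only their block [0,M) x [0,N) is
   constrained, so that rows and columns can be added and removed. *)
Definition is_coupling M N mu nu Z :=
  (forall i j, 0 <= Z i j) /\
  (forall i, (i < M)%N -> \sum_(j < N) Z i j = mu i) /\
  (forall j, (j < N)%N -> \sum_(i < M) Z i j = nu j).

Definition tcost M N f Z := \sum_(i < M) \sum_(j < N) Z i j * f i j.

Lemma coupling_ext M N mu nu mu' nu' Z :
  (forall i, (i < M)%N -> mu i = mu' i) -> (forall j, (j < N)%N -> nu j = nu' j) ->
  is_coupling M N mu nu Z -> is_coupling M N mu' nu' Z.
Proof.
move=> emu enu [Z0 [Zr Zc]]; split=> //; split=> [i iM|j jN].
  by rewrite Zr // emu.
by rewrite Zc // enu.
Qed.

Lemma coupling_mass M N mu nu Z :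
  is_coupling M N mu nu Z -> \sum_(j < N) nu j = \sum_(i < M) mu i.
Proof.
case=> _ [Zr Zc]; under eq_bigr => j _ do rewrite -Zc //.
by rewrite exchange_big; apply: eq_bigr => i _; rewrite Zr.
Qed.

Section OneCoupling.
Variables (M N : nat) (mu nu : nat -> R) (Z : nat -> nat -> R).
Hypothesis cZ : is_coupling M N mu nu Z.

Lemma coupling_ge0 i j : 0 <= Z i j.
Proof. by case: cZ. Qed.

Lemma coupling_col_ge0 j : (j < N)%N -> 0 <= nu j.
Proof. by case: cZ => Z0 [_ Zc] jN; rewrite -Zc // sumr_ge0. Qed.

Lemma coupling_col_eq0 i j : (i < M)%N -> (j < N)%N -> nu j = 0 -> Z i j = 0.
Proof.
case: cZ => Z0 [_ Zc] iM jN nu0.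
by apply: (@psumr_eq0P _ _ predT (fun i : 'I_M => Z i j) _ _ (Ordinal iM)) => //; rewrite Zc.
Qed.

Lemma coupling_row_eq0 i j : (i < M)%N -> (j < N)%N -> mu i = 0 -> Z i j = 0.
Proof.
case: cZ => Z0 [Zr _] iM jN mu0.
by apply: (@psumr_eq0P _ _ predT (fun j : 'I_N => Z i j) _ _ (Ordinal jN)) => //; rewrite Zr.
Qed.

End OneCoupling.

Definition diag_coupling mu i j := if j == i then mu i else 0.

Lemma diag_couplingP N mu : (forall i, 0 <= mu i) -> is_coupling N N mu mu (diag_coupling mu).
Proof.
move=> mu0; split; [|split] => [i j|i iN|j jN]; rewrite /diag_coupling.
- by case: eqP.
- exact: (sum_ord_pick (fun=> mu i) iN).
- by under eq_bigr => i _ do rewrite eq_sym; rewrite (sum_ord_pick mu).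
Qed.

Lemma tcost_diag_coupling N mu f :
  tcost N N f (diag_coupling mu) = \sum_(i < N) mu i * f i i.
Proof.
apply: eq_bigr => i _; rewrite /diag_coupling.
under eq_bigr => j _ do rewrite (fun_if (fun x => x * f i j)) mul0r.
by rewrite (sum_ord_pick (fun j => mu i * f i j)).
Qed.

Lemma tcost_ge0 M N mu nu Z f : is_coupling M N mu nu Z ->
  (forall i j, (i < M)%N -> (j < N)%N -> 0 <= f i j) -> 0 <= tcost M N f Z.
Proof.
move=> cZ f0; do 2![apply: sumr_ge0 => ? _].
by rewrite mulr_ge0 ?f0 //; apply: (coupling_ge0 cZ).
Qed.

Lemma tcost_le_mass M N mu nu Z f : is_coupling M N mu nu Z ->
  (forall i j, (i < M)%N -> (j < N)%N -> f i j <= 1) -> tcost M N f Z <= \sum_(i < M) mu i.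
Proof.
move=> cZ f1; have [Z0 [Zr _]] := cZ; apply: ler_sum => i _; rewrite -Zr //.
by apply: ler_sum => j _; rewrite ler_piMr ?f1.
Qed.

Definition glue K nu (x y : nat -> nat -> R) (i l : nat) : R :=
  \sum_(j < K) x i j * y j l / nu j.

Section Gluing.
Variables (M K N : nat) (mu nu rho : nat -> R) (x y : nat -> nat -> R).
Hypotheses (cx : is_coupling M K mu nu x) (cy : is_coupling K N nu rho y).

Let xK i j : (i < M)%N -> (j < K)%N -> x i j / nu j * nu j = x i j.
Proof. by move=> iM jK; apply/divfK_null/(coupling_col_eq0 cx). Qed.

Let yK j l : (j < K)%N -> (l < N)%N -> y j l / nu j * nu j = y j l.
Proof. by move=> jK lN; apply/divfK_null/(coupling_row_eq0 cy). Qed.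

Lemma glue_coupling : is_coupling M N mu rho (glue K nu x y).
Proof.
have [_ [xr xc]] := cx; have [_ [yr yc]] := cy.
split; [|split] => [i l|i iM|l lN].
- apply: sumr_ge0 => j _; apply: divr_ge0; last exact: (coupling_col_ge0 cx).
  by rewrite mulr_ge0 // (coupling_ge0 cx, coupling_ge0 cy).
- rewrite exchange_big -(xr i iM); apply: eq_bigr => j _.
  under eq_bigr => l _ do rewrite mulrAC.
  by rewrite -big_distrr /= yr //; apply: xK.
- rewrite exchange_big -(yc l lN); apply: eq_bigr => j _.
  under eq_bigr => i _ do rewrite [x i j * _]mulrC mulrAC.
  by rewrite -big_distrr /= xc //; apply: yK.
Qed.

Lemma glue_cost f :
  (forall i j l, (i < M)%N -> (j < K)%N -> (l < N)%N -> f i l <= f i j + f j l) ->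
  tcost M N f (glue K nu x y) <= tcost M K f x + tcost K N f y.
Proof.
move=> tri; pose w i j l := x i j * y j l / nu j.
have w0 i j l : (j < K)%N -> 0 <= w i j l.
  move=> jK; apply: divr_ge0; last exact: (coupling_col_ge0 cx).
  by rewrite mulr_ge0 // (coupling_ge0 cx, coupling_ge0 cy).
have [_ [xr xc]] := cx; have [_ [yr yc]] := cy.
have ex : tcost M K f x = \sum_(i < M) \sum_(l < N) \sum_(j < K) w i j l * f i j.
  apply: eq_bigr => i _; rewrite exchange_big; apply: eq_bigr => j _.
  rewrite -big_distrl /=; congr (_ * _).
  under eq_bigr => l _ do rewrite /w mulrAC.
  by rewrite -big_distrr /= yr //; apply/esym/xK.
have ey : tcost K N f y = \sum_(i < M) \sum_(l < N) \sum_(j < K) w i j l * f j l.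
  rewrite exchange_big /=; under eq_bigr => l _ do rewrite exchange_big.
  rewrite /tcost exchange_big /=; apply: eq_bigr => l _; apply: eq_bigr => j _.
  rewrite -big_distrl /=; congr (_ * _).
  under eq_bigr => i _ do rewrite /w [x i j * _]mulrC mulrAC.
  by rewrite -big_distrr /= xc //; apply/esym/yK.
rewrite ex ey -big_split; apply: ler_sum => i _; rewrite -big_split.
apply: ler_sum => l _; rewrite /glue big_distrl -big_split /=; apply: ler_sum => j _.
by rewrite -mulrDr ler_wpM2l ?w0 ?tri.
Qed.

End Gluing.

Lemma tcost_split M N f Z j : (j < M)%N -> (j < N)%N ->
  tcost M N f Z = Z j j * f j j + \sum_(k < M | (k : nat) != j) Z k j * f k j
    + \sum_(l < N | (l : nat) != j) Z j l * f j l
    + \sum_(k < M | (k : nat) != j) \sum_(l < N | (l : nat) != j) Z k l * f k l.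
Proof.
move=> jM jN; rewrite /tcost (sum_ord_D1 (fun k => \sum_(l < N) Z k l * f k l) jM) /=.
rewrite (sum_ord_D1 (fun l => Z j l * f j l) jN).
under eq_bigr => k _ do rewrite (sum_ord_D1 (fun l => Z k l * f k l) jN).
by rewrite big_split /= addrA (addrAC (Z j j * f j j)).
Qed.

(* The mass Z k j * Z j l / u, with u the off-diagonal mass of row j, is moved
   from (k,j) and (j,l) onto (k,l): by the triangle inequality through j this
   does not increase the cost, and column j becomes diagonal. *)
Definition clean_col mu nu Z j (k l : nat) : R :=
  if l == j then (if k == j then nu j else 0)
  else if k == j then (1 - (nu j - Z j j) / (mu j - Z j j)) * Z j l
  else Z k l + Z k j * Z j l / (mu j - Z j j).

Section CleanColumn.
Variables (M N : nat) (mu nu : nat -> R) (Z : nat -> nat -> R) (j : nat).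
Hypotheses (cZ : is_coupling M N mu nu Z) (jM : (j < M)%N) (jN : (j < N)%N).
Hypothesis nu_le_mu : nu j <= mu j.

Let u := mu j - Z j j.
Let g := nu j - Z j j.
Let t := g / u.

Let row_off : \sum_(l < N | (l : nat) != j) Z j l = u.
Proof. by have [_ [Zr _]] := cZ; rewrite /u -(Zr j jM) (sum_ord_D1 (Z j) jN) addrC addKr. Qed.

Let col_off : \sum_(k < M | (k : nat) != j) Z k j = g.
Proof.
by have [_ [_ Zc]] := cZ; rewrite /g -(Zc j jN) (sum_ord_D1 (Z^~ j) jM) addrC addKr.
Qed.

Let g_ge0 : 0 <= g.
Proof. by rewrite -col_off sumr_ge0 // => k _; apply: (coupling_ge0 cZ). Qed.

Let g_le_u : g <= u.
Proof. by rewrite lerD2r. Qed.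

Let u_ge0 : 0 <= u.
Proof. exact: le_trans g_le_u. Qed.

Let off_col_le k : (k < M)%N -> k != j -> Z k j <= g.
Proof.
move=> kM kj; rewrite -col_off (ler_sum_term (F := Z^~ j) (P := [pred k | k != j])) //.
by move=> i; apply: (coupling_ge0 cZ).
Qed.

Let off_colK k : (k < M)%N -> k != j -> Z k j / u * u = Z k j.
Proof.
move=> kM kj; apply: divfK_null => u0.
by apply/eqP; rewrite eq_le (coupling_ge0 cZ) andbT -u0 (le_trans (off_col_le kM kj)).
Qed.

Let tK : t * u = g.
Proof. by apply: divfK_null => u0; apply/eqP; rewrite eq_le g_ge0 andbT -u0. Qed.

Let t_le1 : 0 <= 1 - t.
Proof.
rewrite subr_ge0 /t; have [->|u0] := eqVneq u 0; first by rewrite invr0 mulr0.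
by rewrite ler_pdivrMr ?mul1r // lt_def u0 u_ge0.
Qed.

Lemma clean_col_coupling : is_coupling M N mu nu (clean_col mu nu Z j).
Proof.
have [Z0 [Zr Zc]] := cZ; split; [|split] => [k l|k kM|l lN].
- rewrite /clean_col -/u -/g -/t; case: eqP => _.
    by case: eqP => _ //; apply: (coupling_col_ge0 cZ).
  case: eqP => _; first exact: mulr_ge0.
  by rewrite addr_ge0 ?divr_ge0 ?mulr_ge0.
- rewrite (sum_ord_D1 (clean_col mu nu Z j k) jN) {1}/clean_col eqxx.
  have [->|kj] := eqVneq k j.
    under eq_bigr => l /negbTE lj do rewrite /clean_col lj eqxx -/u -/g -/t.
    by rewrite -big_distrr /= row_off mulrBl mul1r tK /u /g; ring.
  rewrite add0r.
  under eq_bigr => l /negbTE lj do rewrite /clean_col lj (negbTE kj) -/u mulrAC.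
  rewrite big_split /= -big_distrr /= row_off off_colK //.
  by rewrite -(Zr k kM) (sum_ord_D1 (Z k) jN) addrC.
- have [->|lj] := eqVneq l j.
    by under eq_bigr => k _ do rewrite /clean_col eqxx; rewrite (sum_ord_pick (fun=> nu j) jM).
  rewrite (sum_ord_D1 (clean_col mu nu Z j ^~ l) jM) /clean_col (negbTE lj) eqxx -/u -/g -/t.
  under eq_bigr => k /negbTE kj do rewrite kj.
  rewrite big_split /= -!big_distrl /= col_off.
  have := Zc l lN; rewrite (sum_ord_D1 (Z^~ l) jM) => <-.
  rewrite /t; ring.
Qed.

Lemma clean_col_offdiag k : k != j -> clean_col mu nu Z j k j = 0.
Proof. by rewrite /clean_col eqxx => /negbTE ->. Qed.

Lemma clean_col_id k l : l != j -> Z j l = 0 -> clean_col mu nu Z j k l = Z k l.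
Proof.
rewrite /clean_col => /negbTE -> Zjl; rewrite Zjl !mulr0 mul0r addr0.
by case: eqP => // ->.
Qed.

Lemma clean_col_cost f : f j j = 0 ->
  (forall k l, (k < M)%N -> (l < N)%N -> f k l <= f k j + f j l) ->
  tcost M N f (clean_col mu nu Z j) <= tcost M N f Z.
Proof.
move=> fjj tri; rewrite !(tcost_split _ _ jM jN) fjj !mulr0 !add0r.
rewrite big1 ?add0r => [|k kj]; last by rewrite clean_col_offdiag ?mul0r.
set A := \sum_(k < M | _) Z k j * f k j.
set B := \sum_(l < N | _) Z j l * f j l.
set C := \sum_(k < M | _) \sum_(l < N | _) Z k l * f k l.
pose P := \sum_(k < M | (k : nat) != j) \sum_(l < N | (l : nat) != j)
  Z k j * Z j l / u * f k l.
have -> : \sum_(l < N | (l : nat) != j) clean_col mu nu Z j j l * f j l = (1 - t) * B.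
  by rewrite big_distrr; apply: eq_bigr => l /negbTE lj; rewrite /clean_col lj eqxx -mulrA.
have -> : \sum_(k < M | (k : nat) != j) \sum_(l < N | (l : nat) != j)
    clean_col mu nu Z j k l * f k l = C + P.
  rewrite -big_split; apply: eq_bigr => k /negbTE kj.
  by rewrite -big_split; apply: eq_bigr => l /negbTE lj; rewrite /clean_col lj kj mulrDl.
have PA : \sum_(k < M | (k : nat) != j) \sum_(l < N | (l : nat) != j)
    Z k j * Z j l / u * f k j = A.
  apply: eq_bigr => k kj.
  rewrite (eq_bigr (fun l : 'I_N => Z k j / u * f k j * Z j l)) => [|l _]; last by ring.
  by rewrite -big_distrr /= row_off mulrAC off_colK.
have PB : \sum_(k < M | (k : nat) != j) \sum_(l < N | (l : nat) != j)
    Z k j * Z j l / u * f j l = t * B.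
  rewrite exchange_big big_distrr; apply: eq_bigr => l _.
  rewrite (eq_bigr (fun k : 'I_M => Z k j * (Z j l / u * f j l))) => [|k _]; last by ring.
  by rewrite -big_distrl /= col_off /t; ring.
suff : P <= A + t * B by rewrite mulrBl mul1r; lra.
rewrite -PA -PB -big_split; apply: ler_sum => k kj; rewrite -big_split.
apply: ler_sum => l lj; rewrite /= -mulrDr ler_wpM2l ?tri //.
by rewrite divr_ge0 ?mulr_ge0 //; apply: (coupling_ge0 cZ).
Qed.

End CleanColumn.

Lemma clean_cols M N mu nu Z f s :
  is_coupling M N mu nu Z -> (s <= M)%N -> (s <= N)%N ->
  (forall j, (j < s)%N -> nu j <= mu j) -> (forall j, (j < s)%N -> f j j = 0) ->
  (forall k l j, (k < M)%N -> (l < N)%N -> (j < s)%N -> f k l <= f k j + f j l) ->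
  exists Z', [/\ is_coupling M N mu nu Z', tcost M N f Z' <= tcost M N f Z &
    forall j k, (j < s)%N -> k != j -> Z' k j = 0].
Proof.
move=> cZ; elim: s => [|s IH] sM sN nu_le_mu fjj tri; first by exists Z.
have [Z1 [cZ1 costZ1 clean1]] := IH (ltnW sM) (ltnW sN)
  (fun j js => nu_le_mu j (ltnW js)) (fun j js => fjj j (ltnW js))
  (fun k l j kM lN js => tri k l j kM lN (ltnW js)).
have nu_le_mu_s := nu_le_mu s (ltnSn s).
exists (clean_col mu nu Z1 s); split.
- exact: (clean_col_coupling cZ1 sM sN nu_le_mu_s).
- apply: le_trans (clean_col_cost cZ1 sM sN nu_le_mu_s _ _) costZ1; first exact: fjj.
  by move=> k l kM lN; apply: tri.
- move=> j k; rewrite ltnS leq_eqVlt => /orP[/eqP -> | js] kj.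
    exact: clean_col_offdiag.
  have jns : j != s by rewrite neq_ltn js.
  by rewrite clean_col_id ?clean1 // eq_sym.
Qed.

Definition tail M N Z i := \sum_(l < N | (M <= l)%N) Z i l.

Lemma clean_coupling_tail_ge M N mu nu Z s i : is_coupling M N mu nu Z -> (s <= N)%N ->
  (forall j k, (j < s)%N -> k != j -> Z k j = 0) -> (i < s)%N -> (i < M)%N ->
  mu i - nu i <= tail s N Z i.
Proof.
rewrite /tail => cZ sN clean si iM; have [Z0 [Zr Zc]] := cZ; have iN := leq_trans si sN.
rewrite -(Zr i iM) (bigID (fun l : 'I_N => (s <= l)%N)) /= -addrA gerDl subr_le0.
rewrite (bigD1 (Ordinal iN)) /= -?ltnNge // big1 ?addr0 => [|l /andP[ls li]].
  by rewrite -(Zc i iN) (ler_sum_term (F := Z^~ i) (P := predT)).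
by apply: clean => //; [rewrite ltnNge | rewrite eq_sym].
Qed.

Definition tail_frac M N Z del i := del i / tail M N Z i.

Definition add_row M N Z del i j :=
  if (i < M)%N then (if (M <= j)%N then (1 - tail_frac M N Z del i) * Z i j else Z i j)
  else if (M <= j)%N then \sum_(k < M) tail_frac M N Z del k * Z k j else 0.

Definition tail_to_diag M N Z del i j :=
  if (i < M)%N then
    (if (M <= j)%N then (1 - tail_frac M N Z del i) * Z i j
     else if i == j then Z i j + del i else Z i j)
  else Z i j.

Section TailTransfer.
Variables (M N : nat) (mu nu del : nat -> R) (Z : nat -> nat -> R).
Hypotheses (cZ : is_coupling M N mu nu Z)
  (del_tail : forall i, (i < M)%N -> 0 <= del i <= tail M N Z i).

Let r := tail_frac M N Z del.

Let tail_ge0 i : 0 <= tail M N Z i.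
Proof. by apply: sumr_ge0 => l _; apply: (coupling_ge0 cZ). Qed.

Let del_ge0 i : (i < M)%N -> 0 <= del i.
Proof. by case/del_tail/andP. Qed.

Let r_tail i : (i < M)%N -> r i * tail M N Z i = del i.
Proof.
move=> iM; apply: divfK_null => t0; have /andP[d0 dt] := del_tail iM.
by apply/eqP; rewrite eq_le d0 andbT -t0.
Qed.

Let r_ge0 i : (i < M)%N -> 0 <= r i.
Proof. by move=> iM; rewrite divr_ge0 ?del_ge0. Qed.

Let r_le1 i : (i < M)%N -> 0 <= 1 - r i.
Proof.
move=> iM; have /andP[_ dt] := del_tail iM; rewrite subr_ge0 /r /tail_frac.
have [->|t0] := eqVneq (tail M N Z i) 0; first by rewrite invr0 mulr0.
by rewrite ler_pdivrMr ?mul1r // lt_def t0 tail_ge0.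
Qed.

Let row_tail_mass i : (i < M)%N ->
  \sum_(j < N) (if (M <= j)%N then r i * Z i j else 0) = del i.
Proof. by move=> iM; rewrite -big_mkcond /= -big_distrr /= r_tail. Qed.

Lemma add_row_coupling :
  is_coupling M.+1 N (fun i => if (i < M)%N then mu i - del i else \sum_(k < M) del k) nu
    (add_row M N Z del).
Proof.
have [Z0 [Zr Zc]] := cZ; rewrite /add_row -/r.
split; [|split] => [i j|i|j jN].
- case: ifP => iM; case: ifP => _ //; first by rewrite mulr_ge0 ?r_le1.
  by rewrite sumr_ge0 // => k _; rewrite mulr_ge0 ?r_ge0.
- rewrite ltnS leq_eqVlt => /orP[/eqP -> | iM].
    rewrite ltnn -big_mkcond /= exchange_big /=; apply: eq_bigr => k _.
    by rewrite -big_distrr /= -r_tail.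
  rewrite iM -(Zr i iM) -(row_tail_mass iM) -sumrB; apply: eq_bigr => j _.
  by case: ifP => _; rewrite ?subr0 // mulrBl mul1r.
- rewrite big_ord_recr /= ltnn; under eq_bigr => i _ do rewrite ltn_ord.
  case: ifP => _; last by rewrite addr0 Zc.
  by rewrite -big_split /= -(Zc j jN); apply: eq_bigr => i _; rewrite mulrBl mul1r subrK.
Qed.

Lemma add_row_cost f :
  (forall k j, (k < M)%N -> (M <= j)%N -> (j < N)%N -> f M j <= f k j) ->
  tcost M.+1 N f (add_row M N Z del) <= tcost M N f Z.
Proof.
move=> f_new; rewrite /tcost big_ord_recr /= /add_row -/r ltnn.
have old_row i : (i < M)%N ->
    \sum_(j < N) (if (M <= j)%N then (1 - r i) * Z i j else Z i j) * f i j =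
    \sum_(j < N) Z i j * f i j - \sum_(j < N | (M <= j)%N) r i * Z i j * f i j.
  move=> iM; rewrite [X in _ = _ - X]big_mkcond -sumrB; apply: eq_bigr => j _.
  by case: ifP => _; ring.
under eq_bigr => i _ do rewrite ltn_ord old_row //.
rewrite sumrB addrAC lerBlDr lerD2l.
rewrite (eq_bigr (fun j : 'I_N => if (M <= j)%N then \sum_(k < M) r k * Z k j * f M j else 0));
  last by move=> j _; case: ifP => _; rewrite ?mul0r ?big_distrl.
rewrite -big_mkcond /= exchange_big /=; apply: ler_sum => k _; apply: ler_sum => j Mj.
by rewrite ler_wpM2l ?f_new // mulr_ge0 ?r_ge0 //; apply: (coupling_ge0 cZ).
Qed.

Let tail_to_diagE i j : (i < M)%N -> tail_to_diag M N Z del i j =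
  Z i j - (if (M <= j)%N then r i * Z i j else 0) + (if j == i then del i else 0).
Proof.
move=> iM; rewrite /tail_to_diag iM -/r; case: ifP => Mj.
  have /negbTE -> : j != i by rewrite neq_ltn (leq_trans iM Mj) orbT.
  by rewrite addr0 mulrBl mul1r.
by rewrite subr0 eq_sym; case: eqP; rewrite ?addr0.
Qed.

Lemma tail_to_diag_coupling : (M <= N)%N ->
  is_coupling M N mu
    (fun j => if (j < M)%N then nu j + del j else \sum_(i < M) (1 - r i) * Z i j)
    (tail_to_diag M N Z del).
Proof.
have [Z0 [Zr Zc]] := cZ; move=> MN; split; [|split] => [i j|i iM|j jN].
- rewrite /tail_to_diag -/r; case: ifP => iM //.
  case: ifP => _; first by rewrite mulr_ge0 ?r_le1.
  by case: ifP => _ //; rewrite addr_ge0 ?del_ge0.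
- under eq_bigr => j _ do rewrite tail_to_diagE //.
  rewrite big_split /= sumrB row_tail_mass // Zr //.
  by rewrite (sum_ord_pick (fun=> del i) (leq_trans iM MN)) subrK.
- case: ifP => jM; last first.
    by under eq_bigr => i _ do rewrite /tail_to_diag ltn_ord leqNgt jM.
  under eq_bigr => i _ do rewrite tail_to_diagE // leqNgt jM subr0 eq_sym.
  by rewrite big_split /= Zc // (sum_ord_pick del jM).
Qed.

Lemma tail_to_diag_col_le j : (M <= j)%N -> (j < N)%N ->
  \sum_(i < M) (1 - r i) * Z i j <= nu j.
Proof.
have [Z0 [_ Zc]] := cZ; move=> Mj jN; rewrite -(Zc j jN) ler_sum // => i _.
by rewrite ler_piMl // lerBlDr lerDl r_ge0.
Qed.

Lemma tail_to_diag_cost f : (forall k l, 0 <= f k l) -> (forall i, (i < M)%N -> f i i = 0) ->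
  tcost M N f (tail_to_diag M N Z del) <= tcost M N f Z.
Proof.
move=> f0 fii; apply: ler_sum => i _.
under eq_bigr => j _ do rewrite tail_to_diagE // !mulrDl mulNr.
rewrite big_split /= [X in _ + X]big1 => [|j _]; last first.
  by case: eqP => [->|_]; rewrite ?fii ?mulr0 ?mul0r.
rewrite addr0 sumrB gerDl oppr_le0 sumr_ge0 // => j _.
by case: ifP; rewrite ?mul0r // mulr_ge0 // mulr_ge0 ?r_ge0 //; apply: (coupling_ge0 cZ).
Qed.

End TailTransfer.

Definition col_surplus q nu rho j := if (j < q)%N then rho j - nu j else 0.

Definition merge_last_col q nu rho Z i j := Z i j + Z i q / nu q * col_surplus q nu rho j.

Section MergeLastColumn.
Variables (M q : nat) (mu nu rho : nat -> R) (Z : nat -> nat -> R).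
Hypotheses (cZ : is_coupling M q.+1 mu nu Z)
  (nu_le_rho : forall j, (j < q)%N -> nu j <= rho j).
Hypothesis same_mass : \sum_(j < q) rho j = \sum_(j < q.+1) nu j.

Let w := col_surplus q nu rho.

Let w_ge0 j : 0 <= w j.
Proof. by rewrite /w /col_surplus; case: ifP => // /nu_le_rho; rewrite subr_ge0. Qed.

Let w_sum : \sum_(j < q) w j = nu q.
Proof.
under eq_bigr => j _ do rewrite /w /col_surplus ltn_ord.
by rewrite sumrB same_mass big_ord_recr /= addrAC subrr add0r.
Qed.

Let last_colK i : (i < M)%N -> Z i q / nu q * nu q = Z i q.
Proof. by move=> iM; apply/divfK_null/(coupling_col_eq0 cZ). Qed.

Let wK j : (j < q)%N -> w j / nu q * nu q = w j.
Proof.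
move=> jq; apply: divfK_null => nu0.
apply: (@psumr_eq0P _ _ predT (fun j : 'I_q => w j) (fun j _ => w_ge0 j) _ (Ordinal jq)) => //.
by rewrite w_sum.
Qed.

Let last_col_ge0 : 0 <= nu q.
Proof. exact: (coupling_col_ge0 cZ). Qed.

Lemma merge_last_col_coupling : is_coupling M q mu rho (merge_last_col q nu rho Z).
Proof.
have [Z0 [Zr Zc]] := cZ; rewrite /merge_last_col -/w.
split; [|split] => [i j|i iM|j jq].
- by rewrite addr_ge0 // mulr_ge0 ?divr_ge0.
- rewrite big_split /= -big_distrr /= w_sum last_colK //.
  by rewrite -(Zr i iM) big_ord_recr.
- rewrite big_split /= -!big_distrl /= !Zc ?(ltn_trans jq) //.
  by rewrite mulrC mulrA mulrAC wK // /w /col_surplus jq addrC subrK.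
Qed.

Lemma merge_last_col_cost f :
  (forall i j, (i < M)%N -> (j < q)%N -> nu j != rho j -> f i j <= f i q) ->
  tcost M q f (merge_last_col q nu rho Z) <= tcost M q.+1 f Z.
Proof.
move=> f_last; apply: ler_sum => i _; rewrite big_ord_recr /=.
under eq_bigr => j _ do rewrite /merge_last_col -/w mulrDl.
rewrite big_split /= lerD2l.
apply: (@le_trans _ _ (\sum_(j < q) Z i q / nu q * w j * f i q)).
  apply: ler_sum => j _; have [->|wj] := eqVneq (w j) 0; first by rewrite !mulr0 !mul0r.
  apply: ler_wpM2l; first by rewrite mulr_ge0 // divr_ge0 // (coupling_ge0 cZ).
  by apply: f_last => //; move: wj; rewrite /w /col_surplus ltn_ord subr_eq0 eq_sym.
by rewrite -big_distrl /= -big_distrr /= w_sum last_colK.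
Qed.

End MergeLastColumn.

End Couplings.

Section RecursiveDistance.
Variables (R : realType) (pi D : nat -> nat -> R).
Hypotheses (pi_prob : prob_seq pi) (D_rec : is_d pi D).

Let pi_ge0 m i : 0 <= pi m i.
Proof. by have [] := pi_prob m. Qed.

Let pi_sum m : \sum_(i < m.+1) pi m i = 1.
Proof. by have [_ []] := pi_prob m. Qed.

Lemma D00 : D 0 0 = 0.
Proof. by case: D_rec. Qed.

Lemma D0S n : D 0 n.+1 = 1.
Proof. by case: D_rec => _ [/(_ n) []]. Qed.

Lemma DS0 n : D n.+1 0 = 1.
Proof. by case: D_rec => _ [/(_ n) []]. Qed.

Lemma D_le_tcost m n Z :
  is_coupling m.+1 n.+1 (pi m) (pi n) Z -> D m.+1 n.+1 <= tcost m.+1 n.+1 D Z.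
Proof.
case: D_rec => _ [_ /(_ m n) [_ D_min]] [Z0 [Zr Zc]].
have -> : tcost m.+1 n.+1 D Z = cost D (\matrix_(i < m.+1, j < n.+1) Z i j).
  by apply: eq_bigr => i _; apply: eq_bigr => j _; rewrite mxE.
apply: D_min; split; [|split] => [i j|i|j]; rewrite ?mxE //.
  by rewrite -(Zr i (ltn_ord i)); apply: eq_bigr => j _; rewrite mxE.
by rewrite -(Zc j (ltn_ord j)); apply: eq_bigr => i _; rewrite mxE.
Qed.

Lemma D_opt m n :
  exists2 Z, is_coupling m.+1 n.+1 (pi m) (pi n) Z & tcost m.+1 n.+1 D Z = D m.+1 n.+1.
Proof.
case: D_rec => _ [_ /(_ m n) [[z [[z0 [zr zc]] <-]] _]].
exists (fun i j => if (i < m.+1)%N && (j < n.+1)%N then z (inord i) (inord j) else 0).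
- split; [|split] => [i j|i im|j jn]; first by case: ifP.
    by rewrite -(inordK im) -zr; apply: eq_bigr => j _; rewrite inordK // im ltn_ord inord_val.
  by rewrite -(inordK jn) -zc; apply: eq_bigr => i _; rewrite inordK // jn ltn_ord inord_val.
- by apply: eq_bigr => i _; apply: eq_bigr => j _; rewrite !ltn_ord !inord_val.
Qed.

Lemma D_ge0_le1 a b : 0 <= D a b <= 1.
Proof.
elim/ltn_ind: a b => [[|m] IH] [|n]; rewrite ?D00 ?D0S ?DS0 ?ler01 ?lexx //.
have [Z cZ <-] := D_opt m n; apply/andP; split.
  by apply: (tcost_ge0 cZ) => i j /IH /(_ j) /andP[].
by rewrite -(pi_sum m); apply: (tcost_le_mass cZ) => i j /IH /(_ j) /andP[].
Qed.

Lemma D_diag a : D a a = 0.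
Proof.
elim/ltn_ind: a => [[|m] IH]; first exact: D00.
apply/le_anti/andP; split; last by case/andP: (D_ge0_le1 m.+1 m.+1).
apply: le_trans (D_le_tcost (diag_couplingP m.+1 (pi_ge0 m))) _.
by rewrite tcost_diag_coupling big1 // => i _; rewrite IH ?mulr0.
Qed.

Lemma D_triangle a b c : D a c <= D a b + D b c.
Proof.
(* Gluing needs the triangle inequality only for first indices below a. *)
elim/ltn_ind: a b c => [[|m] IH] [|n] [|k]; rewrite ?D00 ?D0S ?DS0 ?addr0 ?add0r ?lexx //.
- by rewrite addr_ge0.
- by rewrite lerDl; case/andP: (D_ge0_le1 n.+1 k.+1).
- by case/andP: (D_ge0_le1 m.+1 k.+1) => _ /le_trans; apply; rewrite lerDl.
- by rewrite lerDr; case/andP: (D_ge0_le1 m.+1 n.+1).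
have [x cx <-] := D_opt m n; have [y cy <-] := D_opt n k.
apply: le_trans (D_le_tcost (glue_coupling cx cy)) (glue_cost cx cy _).
by move=> i j l /IH.
Qed.

Lemma D_opt_clean m n : (m <= n)%N -> (forall j, (j <= m)%N -> pi n j <= pi m j) ->
  exists2 Z, is_coupling m.+1 n.+1 (pi m) (pi n) Z /\ tcost m.+1 n.+1 D Z <= D m.+1 n.+1 &
    forall i, (i <= m)%N -> pi m i - pi n i <= tail m.+1 n.+1 Z i.
Proof.
move=> mn pi_le; have [Z0 cZ0 <-] := D_opt m n.
have [Z [cZ costZ cleanZ]] := clean_cols cZ0 (leqnn _) mn pi_le
  (fun j _ => D_diag j) (fun k l j _ _ _ => D_triangle k j l).
by exists Z => // i im; apply: (clean_coupling_tail_ge (s := m.+1) cZ mn cleanZ im im).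
Qed.

Section ConditionH.
Hypothesis pi_H : condH pi.

Lemma pi_antitone j k l : (j <= k)%N -> (k <= l)%N -> pi l j <= pi k j.
Proof.
move=> jk kl; apply: (nonincn_le (f := fun k => pi k j)) jk kl _ => // a ja al.
by have [_ /(_ j ja) /andP[]] := pi_H (ltn0Sn a).
Qed.

Lemma D_row_step n :
  (forall j, (j < n)%N -> forall a, (a <= j)%N -> D a.+1 j.+1 <= D a j.+1) ->
  forall m, (m <= n)%N -> D m.+1 n.+1 <= D m n.+1.
Proof.
move=> IH [_|m mn]; first by rewrite D0S; case/andP: (D_ge0_le1 1 n.+1).
have [Z [cZ costZ] tailZ] := D_opt_clean (ltnW mn) (fun j jm => pi_antitone jm (ltnW mn)).
pose del i := pi m i - pi m.+1 i.
have del_tail i : (i < m.+1)%N -> 0 <= del i <= tail m.+1 n.+1 Z i.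
  move=> im; have [_ /(_ i im) /andP[_ le_pi]] := pi_H (ltn0Sn m).
  rewrite /del subr_ge0 le_pi /=; apply: le_trans (tailZ i im).
  by rewrite lerD2l lerN2 pi_antitone // ltnW.
have cZ' : is_coupling m.+2 n.+1 (pi m.+1) (pi n) (add_row m.+1 n.+1 Z del).
  have new_row : \sum_(k < m.+1) del k = pi m.+1 m.+1.
    rewrite sumrB pi_sum -(pi_sum m.+1) big_ord_recr /=.
    by rewrite addrAC subrr add0r.
  apply: (coupling_ext _ _ (add_row_coupling cZ del_tail)) => // i.
  rewrite ltnS leq_eqVlt => /orP[/eqP -> | im]; first by rewrite ltnn new_row.
  by rewrite im /del opprB addrC subrK.
apply: le_trans (D_le_tcost cZ') _; apply: le_trans costZ.
apply: (add_row_cost cZ del_tail) => k [//|j] km mj jn.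
apply: (nonincn_le (f := fun a => D a j.+1) (lo := 0) _ _ (ltnW km) mj) => // a _ aj.
exact: IH.
Qed.

Lemma D_col_step n :
  (forall b, (b <= n)%N -> forall a, (a <= b)%N -> D a b <= D a b.+1) ->
  forall m, (m <= n)%N -> D m.+1 n.+1 <= D m.+1 n.+2.
Proof.
move=> IH m mn; have mn1 : (m <= n.+1)%N by lia.
have [Z [cZ costZ] tailZ] := D_opt_clean mn1 (fun j jm => pi_antitone jm mn1).
pose del i := pi n i - pi n.+1 i.
have del_tail i : (i < m.+1)%N -> 0 <= del i <= tail m.+1 n.+2 Z i.
  move=> im; have iN : (i < n.+1)%N by lia.
  have [_ /(_ i iN) /andP[_ le_pi]] := pi_H (ltn0Sn n).
  rewrite /del subr_ge0 le_pi /=; apply: le_trans (tailZ i im).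
  by rewrite lerD2r pi_antitone.
have cZ2 := tail_to_diag_coupling cZ del_tail mn1.
set nu1 := (fun j => _) in cZ2.
have nu1_le j : (j < n.+1)%N -> nu1 j <= pi n j.
  rewrite /nu1; case: ifP => jm jn; first by rewrite /del addrC subrK.
  have mj : (m < j)%N by rewrite ltnNge -ltnS jm.
  by apply: le_trans (tail_to_diag_col_le cZ del_tail mj (leqW jn)) _; apply: pi_antitone.
have same_mass : \sum_(j < n.+1) pi n j = \sum_(j < n.+2) nu1 j.
  by rewrite (coupling_mass cZ2) !pi_sum.
have cZ3 := merge_last_col_coupling cZ2 nu1_le same_mass.
apply: le_trans (D_le_tcost cZ3) _; apply: le_trans costZ.
apply: le_trans (merge_last_col_cost cZ2 nu1_le same_mass _) _.
  move=> i j im jn; rewrite /nu1; case: ifP => [_|jm _].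
    by rewrite /del addrC subrK eqxx.
  have ij : (i <= j)%N by lia.
  apply: (nondecn_le (f := D i) _ ij (ltnW jn) (leqnn _)) => b ib bn.
  exact: IH.
apply: (tail_to_diag_cost cZ del_tail) => [k l|i _]; first by case/andP: (D_ge0_le1 k l).
exact: D_diag.
Qed.

Lemma D_row_antitone m n : (m <= n)%N -> D m.+1 n.+1 <= D m n.+1.
Proof. by elim/ltn_ind: n m => n IH; apply: D_row_step. Qed.

Lemma D_col_monotone a b : (a <= b)%N -> D a b <= D a b.+1.
Proof.
elim/ltn_ind: b a => [[|n] IH] [|m] mn //; rewrite ?D00 ?D0S ?ler01 //.
exact: D_col_step.
Qed.

End ConditionH.
End RecursiveDistance.

Theorem theorem4 (R : realType) (pi : nat -> nat -> R) (D : nat -> nat -> R) :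
  prob_seq pi -> pairwise_distinct pi -> condH pi -> is_d pi D ->
  (* for 0 <= m <= n : d_{m,n} <= d_{m-1,n} *)
  (forall m n : nat, (m <= n)%N -> D m.+1 n.+1 <= D m n.+1) /\
  (* for -1 <= m <= n : d_{m,n} <= d_{m,n+1}  (here a = m+1, b = n+1) *)
  (forall a b : nat, (a <= b)%N -> D a b <= D a b.+1).
Proof.
move=> pi_prob _ pi_H D_rec; split.
- exact: D_row_antitone.
- exact: D_col_monotone.
Qed.
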